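(* Let $\ddot q\in L^{1,2}_a(\Omega_\delta\times\Omega_\delta)$ with $\ddot q\not\equiv0$. Then the problem $\min_{\kappa_0\in\mathbb{A}^0_\delta}\hat I(\ddot\kappa_0;\ddot q)$, where $\ddot\kappa_0$ is defined by $2\ddot\kappa_0^{-1}(x,x')=\kappa_0^{-1}(x)+\kappa_0^{-1}(x')$, admits an optimal solution given pointwise by $\hat\kappa_0(x)=\hat c_\delta\big[\int_{\Omega_\delta}|\ddot q(x,x')|^2dx'\big]^{1/2}$, where $\hat c_\delta=|\Omega_\delta|\,\|\ddot q\|^{-1}_{L^{1,2}(\Omega_\delta\times\Omega_\delta)}$.
   Context: $\Omega_\delta\subset\mathbb{R}^n$ is a bounded open set. $L^{1,2}(\Omega_\delta\times\Omega_\delta)$ is the mixed-norm space with norm $\|\ddot q\|_{L^{1,2}}=\int_{\Omega_\delta}(\int_{\Omega_\delta}|\ddot q(x,x')|^2dx')^{1/2}dx$; $L^{1,2}_a$ is its subspace of antisymmetric functions ($\ddot q(x,x')=-\ddot q(x',x)$ a.e.). $\mathbb{A}^0_\delta=\{\kappa_0\in L^1(\Omega_\delta):\kappa_0\ge0\text{ a.e.},\ \int_{\Omega_\delta}\kappa_0\le|\Omega_\delta|\}$. $\hat I(\ddot\kappa;\ddot q)=\frac12\int_{\Omega_\delta}\int_{\Omega_\delta}\ddot\kappa^{-1}(x,x')\ddot q(x,x')^2\,dx\,dx'$, with $\kappa_0^{-1}=+\infty$ where $\kappa_0=0$ and the convention $(+\infty)\cdot0=0$. *)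

From HB Require Import structures.
From mathcomp Require Import all_boot all_order all_algebra.
From mathcomp Require Import all_classical all_reals all_analysis.
Set Implicit Arguments. Unset Strict Implicit. Unset Printing Implicit Defensive.
Import Order.TTheory GRing.Theory Num.Theory.
Local Open Scope classical_set_scope.
Local Open Scope ring_scope.

Section defs.
Context {d : measure_display} {T : measurableType d} {R : realType}.
Variable mu : {measure set T -> \bar R}.
Variable Om : set T.

Definition esqrt (x : \bar R) : \bar R :=
  match x with
  | r%:E => (Num.sqrt r)%:E
  | +oo%E => +oo%E
  | -oo%E => 0%E
  end.

Definition inner_sq (q : T -> T -> R) (x : T) : \bar R :=
  (\int[mu]_(x' in Om) (`|q x x'| ^+ 2)%:E)%E.

Definition L12norm (q : T -> T -> R) : \bar R :=
  (\int[mu]_(x in Om) esqrt (inner_sq q x))%E.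

Definition ae2 (P : T -> T -> Prop) : Prop :=
  exists N : set (T * T), measurable N /\ ((mu \x mu) N = 0)%E /\
    [set z | Om z.1 /\ Om z.2 /\ ~ P z.1 z.2] `<=` N.

Definition in_L12 (q : T -> T -> R) : Prop :=
  measurable_fun (Om `*` Om) (fun z => q z.1 z.2) /\ (L12norm q < +oo)%E.

Definition in_L12a (q : T -> T -> R) : Prop :=
  in_L12 q /\ ae2 (fun x x' => q x x' = - q x' x).

Definition ae_zero2 (q : T -> T -> R) : Prop := ae2 (fun x x' => q x x' = 0).

Definition admissible0 (k : T -> R) : Prop :=
  mu.-integrable Om (fun x => (k x)%:E) /\
  {ae mu, forall x, Om x -> 0 <= k x} /\
  (\int[mu]_(x in Om) (k x)%:E <= mu Om)%E.

Definition einv (r : R) : \bar R := if r == 0 then +oo%E else (r^-1)%:E.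

Definition kdd_inv (k : T -> R) (x x' : T) : \bar R :=
  ((2^-1)%:E * (einv (k x) + einv (k x')))%E.

(* hat I(ddot kappa; q) = 1/2 int int ddot kappa^{-1} q^2  (with +oo * 0 = 0) *)
Definition Ihat (k : T -> R) (q : T -> T -> R) : \bar R :=
  ((2^-1)%:E * \int[mu]_(x in Om) \int[mu]_(x' in Om)
     (kdd_inv k x x' * (q x x' ^+ 2)%:E))%E.

Definition c_hat (q : T -> T -> R) : R := fine (mu Om) / fine (L12norm q).

Definition kappa_hat (q : T -> T -> R) (x : T) : R :=
  c_hat q * fine (esqrt (inner_sq q x)).

End defs.

From HB Require Import structures.
From mathcomp Require Import all_boot all_order all_algebra.
From mathcomp Require Import all_classical all_reals all_analysis.
From mathcomp Require Import measurable_realfun ring.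
Import Order.TTheory GRing.Theory Num.Theory.
Local Open Scope classical_set_scope.
Local Open Scope ring_scope.

(* Put [A(x) = int_Om |q(x,x')|^2 dx']. Antisymmetry makes [|q|^2] symmetric,
   so by Tonelli both halves of the harmonic-mean weight
   [2 kdd^-1(x,x') = k^-1(x) + k^-1(x')] contribute equally and
   [Ihat(k; q) = 1/2 int_Om A/k]. The pointwise AM-GM inequality
   [A/k + k/c^2 >= 2 sqrt(A)/c], an equality at [k = c sqrt(A)], integrates to
   [int A/k >= 2 ||q||/c - (int k)/c^2 >= ||q||/c] as soon as
   [int k <= |Om| = c ||q||]; [kappa_hat = c sqrt(A)] is admissible and attains
   this bound. *)

Section sigma_finite_measure_of.
Context {d : measure_display} {T : measurableType d} {R : realType}.
Context {mu : {measure set T -> \bar R}}.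

(* The theorem assumes sigma-finiteness as a hypothesis; this copy of [mu]
   carries it as the canonical structure required by Fubini-Tonelli. *)
Definition sigma_finite_measure_of (_ : sigma_finite setT mu) : set T -> \bar R :=
  mu.

Variable mu_sigma_finite : sigma_finite setT mu.
HB.instance Definition _ := Measure.on (sigma_finite_measure_of mu_sigma_finite).
HB.instance Definition _ := @Measure_isSigmaFinite.Build _ _ _
  (sigma_finite_measure_of mu_sigma_finite) mu_sigma_finite.

End sigma_finite_measure_of.

Section einv_esqrt.
Context {R : realType}.
Local Open Scope ereal_scope.

Lemma measurable_inv : measurable_fun [set: R] (GRing.inv : R -> R).
Proof.
have -> : [set: R] = [set 0%R] `|` [set x | x != 0%R].
  by apply/seteqP; split => [x _|//]; have [->|] := eqVneq x 0%R; [left|right].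
have mneq0 : measurable [set x : R | x != 0%R].
  by apply: open_measurable; exact: open_neq.
apply/(measurable_funU _ (measurable_set1 0%R) mneq0).
split; first exact: measurable_fun_set1.
apply: open_continuous_measurable_fun; first exact: open_neq.
by move=> x /set_mem; exact: inv_continuous.
Qed.

Lemma measurable_einv : measurable_fun [set: R] (@einv R).
Proof.
apply: measurable_fun_ifT.
- by apply: measurable_fun_eqr => //; exact: measurable_cst.
- exact: measurable_cst.
- by apply: measurableT_comp => //; exact: measurable_inv.
Qed.

Lemma measurable_esqrt : measurable_fun [set: \bar R] (@esqrt R).
Proof.
have -> : @esqrt R = fun x => if x == +oo then +oo else (Num.sqrt (fine x))%:E.
  by apply/funext => -[r| |] //=; rewrite sqrtr0.
apply: measurable_fun_ifT; last 2 first.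
- exact: measurable_cst.
- apply: measurableT_comp => //; apply: measurableT_comp => //.
  by apply: continuous_measurable_fun; exact: sqrt_continuous.
apply: (measurable_fun_bool true).
rewrite (_ : _ @^-1` _ = [set +oo]); first by rewrite setTI.
by apply/seteqP; split => x /= /eqP.
Qed.

Lemma einv_ge0 (r : R) : (0 <= r)%R -> 0 <= einv r.
Proof. by rewrite /einv; case: ifPn => // _; rewrite lee_fin invr_ge0. Qed.

Lemma esqrt_ge0 (x : \bar R) : 0 <= esqrt x.
Proof. by case: x => //= r; rewrite lee_fin sqrtr_ge0. Qed.

Lemma einv0_mul (x : \bar R) : 0 <= x -> einv 0 * x = +oo * esqrt x.
Proof.
rewrite /einv eqxx; case: x => [r||//] //= r0.
have [->|rn0] := eqVneq r 0%R; first by rewrite sqrtr0 !mule0.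
have r_gt0 : (0 < r)%R by rewrite lt_def rn0 -lee_fin.
by rewrite !gt0_mulye ?lte_fin ?sqrtr_gt0.
Qed.

Lemma einv_mul_esqrt (c : R) (x : \bar R) : (0 < c)%R -> 0 <= x ->
  einv (c * fine (esqrt x)) * x = (c^-1)%:E * esqrt x.
Proof.
move=> c_gt0; case: x => [r||//] /= r0; last first.
  by rewrite mulr0 /einv eqxx mulyy gt0_muley // lte_fin invr_gt0.
have [->|rn0] := eqVneq r 0%R; first by rewrite sqrtr0 mulr0 /einv eqxx !mule0.
have r_gt0 : (0 < r)%R by rewrite lt_def rn0 -lee_fin.
have csqrt_neq0 : (c * Num.sqrt r != 0)%R by rewrite mulf_neq0 ?gt_eqF ?sqrtr_gt0.
rewrite /einv (negbTE csqrt_neq0) -EFinM -{2}(sqr_sqrtr (ltW r_gt0)).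
by congr EFin; field; rewrite !gt_eqF ?sqrtr_gt0.
Qed.

(* AM-GM; equality holds iff [k = c sqrt(x)]. *)
Lemma esqrt_le_einv_mulD (c k : R) (x : \bar R) :
  (0 < c)%R -> (0 <= k)%R -> 0 <= x ->
  (2 / c)%:E * esqrt x <= einv k * x + (k / c ^+ 2)%:E.
Proof.
move=> c_gt0 k_ge0 x0; have [->|kn0] := eqVneq k 0%R.
  rewrite einv0_mul // mul0r adde0.
  by apply: lee_wpmul2r; [exact: esqrt_ge0|exact: leey].
have k_gt0 : (0 < k)%R by rewrite lt_def kn0.
rewrite /einv (negbTE kn0); case: x x0 => [r||//] /= r0; last first.
  by rewrite (gt0_muley (_ : 0 < k^-1%:E)) ?lte_fin ?invr_gt0 // addye // leey.
rewrite -EFinM -EFinD lee_fin -subr_ge0.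
rewrite lee_fin in r0; rewrite -{1}(sqr_sqrtr r0).
set s := Num.sqrt r.
have -> : (k^-1 * s ^+ 2 + k / c ^+ 2 - 2 / c * s =
           (s * c - k) ^+ 2 / (k * c ^+ 2))%R.
  by field; rewrite !gt_eqF.
by rewrite divr_ge0 ?sqr_ge0 // mulr_ge0 ?sqr_ge0 // ltW.
Qed.

End einv_esqrt.

Section fubini_tonelli_rect.
Context {d : measure_display} {T : measurableType d} {R : realType}.
Context (mu : {sigma_finite_measure set T -> \bar R}) {Om : set T}.
Hypothesis mOm : measurable Om.
Local Open Scope ereal_scope.

Let mOmOm : measurable (Om `*` Om). Proof. exact: measurableX. Qed.

Lemma measurable_fun_rect_section (h : T * T -> \bar R) x :
  measurable_fun (Om `*` Om) h -> Om x -> measurable_fun Om (fun y => h (x, y)).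
Proof.
move=> mh Omx; apply: (measurable_comp mOmOm) mh (measurable_funTS _) => //.
by move=> _ [y Omy <-].
Qed.

Lemma measurable_fun_rect_fst (f : T -> \bar R) : measurable_fun Om f ->
  measurable_fun (Om `*` Om) (fun z => f z.1).
Proof.
move=> mf; apply: (measurable_comp mOm _ mf) (measurable_funTS measurable_fst).
by move=> _ [z [? _] <-].
Qed.

Lemma measurable_fun_rect_snd (f : T -> \bar R) : measurable_fun Om f ->
  measurable_fun (Om `*` Om) (fun z => f z.2).
Proof.
move=> mf; apply: (measurable_comp mOm _ mf) (measurable_funTS measurable_snd).
by move=> _ [z [_ ?] <-].
Qed.

Section nonneg.
Variable h : T -> T -> \bar R.
Hypothesis mh : measurable_fun (Om `*` Om) (fun z => h z.1 z.2).
Hypothesis h_ge0 : forall x y, Om x -> Om y -> 0 <= h x y.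

Let g := (fun z => h z.1 z.2) \_ (Om `*` Om).

Let mg : measurable_fun setT g. Proof. exact/(measurable_restrictT _ mOmOm). Qed.

Let g_ge0 z : 0 <= g z.
Proof. by rewrite /g patchE; case: ifPn => [/set_mem[? ?]|]; [exact: h_ge0|]. Qed.

Let gE x y : g (x, y) = if x \in Om then (h x \_ Om) y else 0.
Proof. by rewrite /g !patchE in_setX; case: (x \in Om). Qed.

Let gE' x y : g (x, y) = if y \in Om then ((h ^~ y) \_ Om) x else 0.
Proof. by rewrite /g !patchE in_setX andbC; case: (y \in Om). Qed.

Let fubini_FE x :
  fubini_F mu g x = ((fun x => \int[mu]_(y in Om) h x y) \_ Om) x.
Proof.
rewrite /fubini_F patchE; under eq_integral do rewrite gE.
by case: ifP => _; [rewrite [RHS]integral_mkcond|exact: integral0_eq].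
Qed.

Let fubini_GE y :
  fubini_G mu g y = ((fun y => \int[mu]_(x in Om) h x y) \_ Om) y.
Proof.
rewrite /fubini_G patchE; under eq_integral do rewrite gE'.
by case: ifP => _; [rewrite [RHS]integral_mkcond|exact: integral0_eq].
Qed.

Lemma measurable_fun_fubini_tonelli_rect :
  measurable_fun Om (fun x => \int[mu]_(y in Om) h x y).
Proof.
apply/(measurable_restrictT _ mOm); rewrite -(funext fubini_FE).
exact: measurable_fun_fubini_tonelli_F.
Qed.

Lemma fubini_tonelli1_rect : \int[mu]_(x in Om) \int[mu]_(y in Om) h x y =
  \int[mu \x mu]_(z in Om `*` Om) h z.1 z.2.
Proof.
rewrite integral_mkcond [RHS]integral_mkcond (fubini_tonelli1 g mg g_ge0).
by apply: eq_integral => x _; rewrite fubini_FE.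
Qed.

Lemma fubini_tonelli2_rect : \int[mu]_(y in Om) \int[mu]_(x in Om) h x y =
  \int[mu \x mu]_(z in Om `*` Om) h z.1 z.2.
Proof.
rewrite integral_mkcond [RHS]integral_mkcond (fubini_tonelli2 g mg g_ge0).
by apply: eq_integral => y _; rewrite fubini_GE.
Qed.

End nonneg.

Lemma measurable_fun_integral_rect (h : T -> T -> \bar R) :
  measurable_fun (Om `*` Om) (fun z => h z.1 z.2) ->
  measurable_fun Om (fun x => \int[mu]_(y in Om) h x y).
Proof.
move=> mh; under eq_fun do rewrite integralE.
apply: emeasurable_funB; apply: measurable_fun_fubini_tonelli_rect => //.
- rewrite (_ : (fun z => _) = (fun z => h z.1 z.2)^\+); last first.
    by apply/funext => z; rewrite !funeposE.
  exact: measurable_funepos.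
- rewrite (_ : (fun z => _) = (fun z => h z.1 z.2)^\-); last first.
    by apply/funext => z; rewrite !funenegE.
  exact: measurable_funeneg.
Qed.

End fubini_tonelli_rect.

Section Ihat_reduction.
Context {d : measure_display} {T : measurableType d} {R : realType}.
Context {mu : {sigma_finite_measure set T -> \bar R}} {Om : set T}.
Context {q : T -> T -> R}.
Hypothesis mOm : measurable Om.
Hypothesis mq : measurable_fun (Om `*` Om) (fun z => q z.1 z.2).
Hypothesis q_antisym : ae2 mu Om (fun x x' => q x x' = - q x' x).
Local Open Scope ereal_scope.

Local Notation A := (inner_sq mu Om q).

Let mq2 : measurable_fun (Om `*` Om) (fun z => (q z.1 z.2 ^+ 2)%:E).
Proof. by apply/measurable_EFinP; exact: measurable_funX. Qed.

Let mq2_section x : Om x -> measurable_fun Om (fun y => (q x y ^+ 2)%:E).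
Proof. exact: measurable_fun_rect_section mOm _ x mq2. Qed.

Let sq_ge0 x y : 0 <= (q x y ^+ 2)%:E.
Proof. by rewrite lee_fin sqr_ge0. Qed.

Lemma inner_sqE x : A x = \int[mu]_(y in Om) (q x y ^+ 2)%:E.
Proof. by apply: eq_integral => y _; rewrite real_normK ?num_real. Qed.

Lemma inner_sq_ge0 x : 0 <= A x.
Proof. by rewrite inner_sqE; exact: integral_ge0. Qed.

Lemma measurable_inner_sq : measurable_fun Om A.
Proof.
rewrite (funext inner_sqE).
exact: (measurable_fun_fubini_tonelli_rect _ mOm (fun x y => (q x y ^+ 2)%:E)).
Qed.

Lemma measurable_esqrt_inner_sq : measurable_fun Om (fun x => esqrt (A x)).
Proof. exact: measurableT_comp measurable_esqrt measurable_inner_sq. Qed.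

Section weight.
Variable k : T -> R.
Hypothesis k_ge0 : forall x, Om x -> (0 <= k x)%R.
Hypothesis mk : measurable_fun Om k.

Let w x := einv (k x).

Let w_ge0 x : Om x -> 0 <= w x.
Proof. by move=> Omx; exact/einv_ge0/k_ge0. Qed.

Let mw : measurable_fun Om w.
Proof. exact: measurableT_comp measurable_einv mk. Qed.

Let mw_sq : measurable_fun (Om `*` Om) (fun z => w z.2 * (q z.1 z.2 ^+ 2)%:E).
Proof. exact: emeasurable_funM (measurable_fun_rect_snd mOm _ mw) mq2. Qed.

Let w_sq_ge0 y a b : Om y -> 0 <= w y * (q a b ^+ 2)%:E.
Proof. by move=> Omy; apply: mule_ge0 => //; exact: w_ge0. Qed.

(* Antisymmetry gives [q(x,y)^2 = q(y,x)^2] a.e., so integrating the weight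
   [w(y)] against [q(x,y)^2] in [x] first produces [w(y) A(y)]. *)
Lemma integral_weight_sq_swap :
  \int[mu]_(x in Om) \int[mu]_(y in Om) (w y * (q x y ^+ 2)%:E) =
  \int[mu]_(y in Om) (w y * A y).
Proof.
have mw_sqT : measurable_fun (Om `*` Om) (fun z => w z.2 * (q z.2 z.1 ^+ 2)%:E).
  apply: emeasurable_funM; first exact: measurable_fun_rect_snd mOm _ mw.
  rewrite (_ : (fun z => _) =
    (fun z => (q z.1 z.2 ^+ 2)%:E) \o (fun z => (z.2, z.1))) //.
  apply: (measurable_comp (measurableX mOm mOm)) => //; last first.
    by apply: measurable_funTS; exact: measurable_swap.
  by move=> _ [[x y] [/= ? ?] <-].
rewrite (fubini_tonelli1_rect _ mOm (fun x y => w y * (q x y ^+ 2)%:E)) //;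
  last by move=> x y _; exact: w_sq_ge0.
transitivity (\int[mu]_(y in Om) \int[mu]_(x in Om) (w y * (q y x ^+ 2)%:E)).
  rewrite (fubini_tonelli2_rect _ mOm (fun x y => w y * (q y x ^+ 2)%:E)) //;
    last by move=> x y _; exact: w_sq_ge0.
  apply: ge0_ae_eq_integral => //; first exact: measurableX.
  - by move=> [x y] [/= _ Omy]; exact: w_sq_ge0.
  - by move=> [x y] [/= _ Omy]; exact: w_sq_ge0.
  case: q_antisym => N [mN [N0 sub]]; exists N; split => //.
  move=> [x y] /= /not_implyP[[/= Omx Omy] neq]; apply: sub; do 2!split => //.
  by move=> /= qxy; apply: neq; rewrite qxy sqrrN.
apply: eq_integral => y /set_mem Omy.
by rewrite ge0_integralZl ?inner_sqE //; [exact: mq2_section|exact: w_ge0].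
Qed.

Lemma IhatE : Ihat mu Om k q = (2^-1)%:E * \int[mu]_(x in Om) (w x * A x).
Proof.
have half_ge0 : (0 <= 2^-1 :> R)%R by rewrite invr_ge0.
have mwA : measurable_fun Om (fun x => w x * A x).
  exact: emeasurable_funM mw measurable_inner_sq.
have wA_ge0 x : Om x -> 0 <= w x * A x.
  by move=> Omx; apply: mule_ge0; [exact: w_ge0|exact: inner_sq_ge0].
pose B x := \int[mu]_(y in Om) (w y * (q x y ^+ 2)%:E).
have mB : measurable_fun Om B.
  apply: (measurable_fun_fubini_tonelli_rect _ mOm (fun x y => w y * _)) => //.
  by move=> x y _; exact: w_sq_ge0.
have B_ge0 x : 0 <= B x by apply: integral_ge0 => y Omy; exact: w_sq_ge0.
have inner x : Om x -> \int[mu]_(y in Om) (kdd_inv k x y * (q x y ^+ 2)%:E) =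
    (2^-1)%:E * (w x * A x + B x).
  move=> Omx; have wx_ge0 := w_ge0 _ Omx; have mq2x := mq2_section _ Omx.
  have mwx : measurable_fun Om (fun y => w x * (q x y ^+ 2)%:E).
    exact: measurable_funeM.
  have mwy : measurable_fun Om (fun y => w y * (q x y ^+ 2)%:E).
    exact: emeasurable_funM.
  have wx_sq_ge0 y : Om y -> 0 <= w x * (q x y ^+ 2)%:E by move=> _; exact: w_sq_ge0.
  rewrite inner_sqE -ge0_integralZl // -ge0_integralD //; last first.
    by move=> y; exact: w_sq_ge0.
  rewrite -ge0_integralZl_EFin //; last 2 first.
  - by move=> y Omy; apply: adde_ge0; [exact: wx_sq_ge0|exact: w_sq_ge0].
  - exact: emeasurable_funD.
  apply: eq_integral => y /set_mem Omy; have wy_ge0 := w_ge0 _ Omy.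
  by rewrite /kdd_inv -muleA ge0_muleDl.
rewrite /Ihat; congr (_ * _).
rewrite (eq_integral (fun x => (2^-1)%:E * (w x * A x + B x))); last first.
  by move=> x /set_mem; exact: inner.
rewrite ge0_integralZl_EFin //; last 2 first.
- by move=> x Omx; exact: adde_ge0 (wA_ge0 _ Omx) (B_ge0 x).
- exact: emeasurable_funD.
rewrite ge0_integralD // integral_weight_sq_swap.
set X := \int[mu]_(x in Om) _; have X_ge0 : 0 <= X by exact: integral_ge0.
rewrite -(mul1e X) -ge0_muleDl ?lee01 // muleA -EFinD -EFinM.
by rewrite (_ : 2^-1 * (1 + 1) = 1)%R //; field.
Qed.

End weight.

Lemma measurable_fun_kdd_inv_sq (k : T -> R) : measurable_fun Om k ->
  measurable_fun (Om `*` Om) (fun z => kdd_inv k z.1 z.2 * (q z.1 z.2 ^+ 2)%:E).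
Proof.
move=> mk; have mw : measurable_fun Om (fun x => einv (k x)).
  exact: measurableT_comp measurable_einv mk.
apply: emeasurable_funM mq2; apply: measurable_funeM.
apply: emeasurable_funD; first exact: measurable_fun_rect_fst mOm _ mw.
exact: measurable_fun_rect_snd mOm _ mw.
Qed.

Lemma Ihat_ae_eq (k k' : T -> R) : measurable_fun Om k -> measurable_fun Om k' ->
  {ae mu, forall x, Om x -> k x = k' x} -> Ihat mu Om k q = Ihat mu Om k' q.
Proof.
move=> mk mk' [N [mN N0 kk'N]].
have kk' x : ~ N x -> Om x -> k x = k' x.
  by move=> Nx Omx; apply: contrapT => kk'x; apply/Nx/kk'N => /(_ Omx).
have ae_eqN (f g : T -> \bar R) :
    (forall x, ~ N x -> Om x -> f x = g x) -> ae_eq mu Om f g.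
  move=> fg; exists N; split => // x /= /not_implyP[Omx fgx].
  by apply: contrapT => Nx; exact/fgx/fg.
rewrite /Ihat; congr (_ * _); apply: ae_eq_integral => //.
- exact: (measurable_fun_integral_rect mu mOm _ (measurable_fun_kdd_inv_sq _ mk)).
- exact: (measurable_fun_integral_rect mu mOm _ (measurable_fun_kdd_inv_sq _ mk')).
apply: (ae_eqN) => x Nx Omx; apply: ae_eq_integral => //.
- exact: measurable_fun_rect_section mOm _ x (measurable_fun_kdd_inv_sq _ mk) Omx.
- exact: measurable_fun_rect_section mOm _ x (measurable_fun_kdd_inv_sq _ mk') Omx.
by apply: ae_eqN => y Ny Omy; rewrite /kdd_inv (kk' x) ?(kk' y).
Qed.

End Ihat_reduction.

Section kappa_hat_optimality.
Context {d : measure_display} {T : measurableType d} {R : realType}.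
Context {mu : {sigma_finite_measure set T -> \bar R}} {Om : set T}.
Context {q : T -> T -> R}.
Hypothesis mOm : measurable Om.
Hypothesis mq : measurable_fun (Om `*` Om) (fun z => q z.1 z.2).
Hypothesis q_antisym : ae2 mu Om (fun x x' => q x x' = - q x' x).
Hypothesis mu_Om_fin : (mu Om < +oo)%E.
Hypothesis L12norm_fin : (L12norm mu Om q < +oo)%E.
Local Open Scope ereal_scope.

Local Notation A := (inner_sq mu Om q).
Local Notation c := (c_hat mu Om q).
Local Notation kappa := (kappa_hat mu Om q).

Let mA : measurable_fun Om A. Proof. exact: measurable_inner_sq. Qed.
Let msqrtA : measurable_fun Om (fun x => esqrt (A x)).
Proof. exact: measurable_esqrt_inner_sq. Qed.

Let l := fine (L12norm mu Om q).
Let m := fine (mu Om).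

Let L12normE : \int[mu]_(x in Om) esqrt (A x) = l%:E.
Proof.
rewrite /l fineK // ge0_fin_numE // integral_ge0 // => x _; exact: esqrt_ge0.
Qed.

Let mu_OmE : mu Om = m%:E.
Proof. by rewrite fineK // ge0_fin_numE. Qed.

Let l_ge0 : (0 <= l)%R.
Proof. by rewrite -lee_fin -L12normE integral_ge0 // => x _; exact: esqrt_ge0. Qed.
Let m_ge0 : (0 <= m)%R. Proof. by rewrite -lee_fin -mu_OmE. Qed.

Lemma c_hat_ge0 : (0 <= c)%R. Proof. exact: divr_ge0. Qed.

Lemma c_hat_mul_le : (c * l <= m)%R.
Proof.
have [->|l_neq0] := eqVneq l 0%R; first by rewrite mulr0.
by rewrite divfK.
Qed.

Lemma c_hat_mulE : c != 0%R -> (c * l = m)%R.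
Proof.
move=> c_neq0; rewrite divfK //; apply: contraNneq c_neq0 => l0.
by rewrite /c_hat l0 invr0 mulr0.
Qed.

Lemma kappa_hat_ge0 x : (0 <= kappa x)%R.
Proof. by rewrite mulr_ge0 ?c_hat_ge0 ?fine_ge0 ?esqrt_ge0. Qed.

Lemma measurable_kappa_hat : measurable_fun Om kappa.
Proof.
apply: measurable_funM; first exact: measurable_cst.
by apply: measurableT_comp; [exact: fine_measurable|exact: msqrtA].
Qed.

Lemma integral_kappa_hat_le : \int[mu]_(x in Om) (kappa x)%:E <= (c * l)%:E.
Proof.
rewrite EFinM -L12normE -ge0_integralZl_EFin ?c_hat_ge0 //; last first.
  by move=> x _; exact: esqrt_ge0.
apply: ge0_le_integral => //.
- by move=> x _; rewrite lee_fin kappa_hat_ge0.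
- exact/measurable_EFinP/measurable_kappa_hat.
- exact: measurable_funeM.
move=> x _; rewrite /kappa_hat EFinM lee_wpmul2l ?lee_fin ?c_hat_ge0 //.
by case: (esqrt (A x)) (esqrt_ge0 (A x)) => [s||] //= _; rewrite leey.
Qed.

Lemma admissible0_kappa_hat : admissible0 mu Om kappa.
Proof.
split; [|split].
- apply/integrableP; split; first exact/measurable_EFinP/measurable_kappa_hat.
  under eq_integral do rewrite gee0_abs ?lee_fin ?kappa_hat_ge0 //.
  exact: le_lt_trans integral_kappa_hat_le (ltey _).
- by apply: aeW => x _; exact: kappa_hat_ge0.
- apply: le_trans integral_kappa_hat_le _.
  by have := c_hat_mul_le; rewrite -lee_fin -mu_OmE.
Qed.

Lemma integral_einv_kappa_hat :
  \int[mu]_(x in Om) (einv (kappa x) * A x) = (c^-1 * l)%:E.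
Proof.
have meA : measurable_fun Om (fun x => einv (kappa x) * A x).
  exact: emeasurable_funM (measurableT_comp measurable_einv measurable_kappa_hat) mA.
have [m0|m_neq0] := eqVneq m 0%R.
  rewrite null_set_integral //; last by move: mu_OmE; rewrite m0.
  by rewrite /c_hat -/m m0 mul0r invr0 mul0r.
have [l0|l_neq0] := eqVneq l 0%R.
  rewrite l0 mulr0; under eq_integral => x _ do
    rewrite /kappa_hat /c_hat -/l l0 invr0 mulr0 mul0r einv0_mul ?inner_sq_ge0 //.
  rewrite ge0_integralZl //; last by move=> x _; exact: esqrt_ge0.
  by rewrite L12normE l0 mule0.
have c_gt0 : (0 < c)%R.
  by rewrite divr_gt0 // lt_def ?m_neq0 ?l_neq0.
under eq_integral do rewrite einv_mul_esqrt ?inner_sq_ge0 //.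
rewrite ge0_integralZl_EFin ?invr_ge0 ?c_hat_ge0 //;
  last by move=> x _; exact: esqrt_ge0.
by rewrite L12normE -EFinM.
Qed.

Lemma L12norm_le_integral_einv (r : R) (k : T -> R) : (0 < r)%R ->
  (forall x, Om x -> 0 <= k x)%R -> measurable_fun Om k ->
  (2 / r)%:E * L12norm mu Om q <=
  \int[mu]_(x in Om) (einv (k x) * A x) +
  (r ^+ 2)^-1%:E * \int[mu]_(x in Om) (k x)%:E.
Proof.
move=> r_gt0 k_ge0 mk; have r_ge0 := ltW r_gt0.
have r2_ge0 : (0 <= (r ^+ 2)^-1)%R by rewrite invr_ge0 exprn_ge0.
have mwA : measurable_fun Om (fun x => einv (k x) * A x).
  exact: emeasurable_funM (measurableT_comp measurable_einv mk) mA.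
have mEk : measurable_fun Om (fun x => (k x)%:E) by exact/measurable_EFinP.
have wA_ge0 x : Om x -> 0 <= einv (k x) * A x.
  by move=> Omx; rewrite mule_ge0 ?einv_ge0 ?k_ge0 ?inner_sq_ge0.
have Ek_ge0 x : Om x -> 0 <= (k x)%:E by move=> Omx; rewrite lee_fin k_ge0.
have rk_ge0 x : Om x -> 0 <= (r ^+ 2)^-1%:E * (k x)%:E.
  by move=> Omx; apply: mule_ge0; [rewrite lee_fin|exact: Ek_ge0].
rewrite /L12norm -!ge0_integralZl_EFin ?divr_ge0 //; last first.
  by move=> x _; exact: esqrt_ge0.
rewrite -ge0_integralD //; last exact: measurable_funeM.
apply: ge0_le_integral => //.
- by move=> x _; rewrite mule_ge0 ?lee_fin ?divr_ge0 ?esqrt_ge0.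
- exact: measurable_funeM.
- by apply: emeasurable_funD => //; exact: measurable_funeM.
move=> x Omx; rewrite -EFinM (mulrC _ (k x)).
exact: esqrt_le_einv_mulD (k_ge0 _ Omx) (inner_sq_ge0 x).
Qed.

Lemma integral_einv_kappa_hat_le (k : T -> R) :
  (forall x, Om x -> 0 <= k x)%R -> measurable_fun Om k ->
  \int[mu]_(x in Om) (k x)%:E <= mu Om ->
  \int[mu]_(x in Om) (einv (kappa x) * A x) <= \int[mu]_(x in Om) (einv (k x) * A x).
Proof.
move=> k_ge0 mk int_k; rewrite integral_einv_kappa_hat.
set X := \int[mu]_(x in Om) _.
have [c0|c_neq0] := eqVneq c 0%R.
  rewrite c0 invr0 mul0r; apply: integral_ge0 => x Omx.
  by rewrite mule_ge0 ?einv_ge0 ?k_ge0 ?inner_sq_ge0.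
have c_gt0 : (0 < c)%R by rewrite lt_def c_neq0 c_hat_ge0.
have int_k_le : (c ^+ 2)^-1%:E * \int[mu]_(x in Om) (k x)%:E <= (c^-1 * l)%:E.
  have mE : ((c ^+ 2)^-1 * m = c^-1 * l)%R by rewrite -(c_hat_mulE c_neq0); field.
  rewrite mu_OmE in int_k.
  rewrite (le_trans (lee_wpmul2l _ int_k)) ?lee_fin ?mE //.
  by rewrite invr_ge0 exprn_ge0 ?c_hat_ge0.
have := L12norm_le_integral_einv _ _ c_gt0 k_ge0 mk.
rewrite /L12norm L12normE => bound.
rewrite -(leeD2rE (x := (c^-1 * l)%:E)) //.
apply: le_trans (le_trans bound (leeD2l X int_k_le)).
by rewrite -EFinD -EFinM (_ : _ + _ = 2 / c * l)%R //; ring.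
Qed.

Lemma Ihat_kappa_hat_le k0 : admissible0 mu Om k0 ->
  Ihat mu Om kappa q <= Ihat mu Om k0 q.
Proof.
move=> [/integrableP[/measurable_EFinP mk0 _] [k0_ge0 int_k0]].
pose k := (k0 \max cst 0%R)%R.
have k_ge0 x : Om x -> (0 <= k x)%R by rewrite /k /= le_max lexx orbT.
have mk : measurable_fun Om k by apply: measurable_maxr => //; exact: measurable_cst.
have k0k : {ae mu, forall x, Om x -> k0 x = k x}.
  by apply: filterS k0_ge0 => x k0x Omx; rewrite /k /= max_l ?k0x.
have int_kE : \int[mu]_(x in Om) (k x)%:E = \int[mu]_(x in Om) (k0 x)%:E.
  apply: ae_eq_integral => //; [exact/measurable_EFinP|exact/measurable_EFinP|].
  by apply: filterS k0k => x k0kx Omx; rewrite k0kx.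
have kappa_ge0 x : Om x -> (0 <= kappa x)%R by move=> _; exact: kappa_hat_ge0.
rewrite (Ihat_ae_eq mOm mq _ _ mk0 mk k0k).
rewrite (IhatE mOm mq q_antisym _ kappa_ge0 measurable_kappa_hat).
rewrite (IhatE mOm mq q_antisym _ k_ge0 mk) lee_wpmul2l ?lee_fin ?invr_ge0 //.
by apply: integral_einv_kappa_hat_le => //; rewrite int_kE.
Qed.

End kappa_hat_optimality.

Theorem proposition2p10 (d : measure_display) (T : measurableType d) (R : realType)
  (mu : {measure set T -> \bar R}) (Om : set T)
  (hsf : sigma_finite setT mu) (mOm : measurable Om) (finOm : (mu Om < +oo)%E)
  (q : T -> T -> R) (hq : in_L12a mu Om q) (hq0 : ~ ae_zero2 mu Om q) :
  admissible0 mu Om (kappa_hat mu Om q) /\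
  forall k0 : T -> R, admissible0 mu Om k0 ->
    (Ihat mu Om (kappa_hat mu Om q) q <= Ihat mu Om k0 q)%E.
Proof.
case: hq => [[mq L12norm_fin] q_antisym].
pose nu := sigma_finite_measure_of hsf.
change (admissible0 nu Om (kappa_hat nu Om q) /\
  forall k0, admissible0 nu Om k0 ->
    (Ihat nu Om (kappa_hat nu Om q) q <= Ihat nu Om k0 q)%E).
split; first exact: admissible0_kappa_hat.
by move=> k0; exact: Ihat_kappa_hat_le.
Qed.
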